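(* Let $T>0$, $g:[0,T]\to(0,\infty)$ continuous, $x_T\in\mathbb{R}^d$. For continuous $f,h:[0,T]\to\mathbb{R}$, $\mathbf{m}\in\mathbb{R}^d$ and $\gamma\in(0,\infty)$, let $$\mathbf{u}^*_{t,\gamma}(\mathbf{x})=g_te^{\bar f_{t:T}}\frac{x_T-e^{\bar f_{t:T}}\mathbf{x}-\mathbf{m}e^{\bar f_T}\bar h_{t:T}}{\gamma^{-1}+e^{2\bar f_T}\bar g^2_{t:T}}$$ and call the ''UniDB forward SDE with hyper-parameters $(f,h,\mathbf{m},\gamma\to\infty)$'' the SDE $d\mathbf{x}_t=(f_t\mathbf{x}_t+h_t\mathbf{m}+g_t\lim_{\gamma\to\infty}\mathbf{u}^*_{t,\gamma}(\mathbf{x}_t))dt+g_td\mathbf{w}_t$. Then: (i) (DDBMs (VE)) With $f_t=0$, $h_t=0$, this SDE equals $d\mathbf{x}_t=g_t^2\frac{x_T-\mathbf{x}_t}{\sigma_T^2-\sigma_t^2}dt+g_td\mathbf{w}_t$, where $\sigma_t^2$ satisfies $\frac{d}{dt}\sigma_t^2=g_t^2$. (ii) (DDBMs (VP)) With $f_t=-\frac12g_t^2$, $h_t=0$, this SDE equals $d\mathbf{x}_t=\Big(-\frac12g_t^2\mathbf{x}_t+g_t^2\frac{\frac{\alpha_t}{\alpha_T}x_T-\mathbf{x}_t}{\sigma_t^2(\mathrm{SNR}_t/\mathrm{SNR}_T-1)}\Big)dt+g_td\mathbf{w}_t$, where $\alpha_t=e^{-\frac12\int_0^tg_z^2dz}$,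 $\sigma_t^2=1-\alpha_t^2$ and $\mathrm{SNR}_t=\alpha_t^2/\sigma_t^2$. (iii) (GOUB) With $f_t=-\theta_t$, $h_t=\theta_t$, $\mathbf{m}=x_T$, where $\theta:[0,T]\to(0,\infty)$ is continuous and $g_t^2=2\lambda^2\theta_t$ for a constant $\lambda>0$, this SDE equals $d\mathbf{x}_t=\Big(\theta_t+g_t^2\frac{e^{-2\bar\theta_{t:T}}}{\bar\sigma^2_{t:T}}\Big)(x_T-\mathbf{x}_t)dt+g_td\mathbf{w}_t$, where $\bar\theta_{s:t}=\int_s^t\theta_zdz$ and $\bar\sigma^2_{s:t}=\lambda^2(1-e^{-2\bar\theta_{s:t}})$.
   Context: Notation: $\bar f_{s:t}=\int_s^tf_zdz$, $\bar f_t=\bar f_{0:t}$, $\bar h_{s:t}=\int_s^te^{-\bar f_z}h_zdz$, $\bar g^2_{s:t}=\int_s^te^{-2\bar f_z}g_z^2dz$; $\mathbf{w}_t$ is a standard Brownian motion; all identities are for $t\in[0,T)$. $\mathbf{u}^*_{t,\gamma}$ is the optimal feedback controller for minimizing $\int_0^T\frac12\|\mathbf{u}\|^2dt+\frac\gamma2\|\mathbf{x}^u_T-x_T\|^2$ under $d\mathbf{x}_t=(f_t\mathbf{x}_t+h_t\mathbf{m}+g_t\mathbf{u}_t)dt$. The three target SDEs are the forward processes of the DDBM (VE), DDBM (VP) and GOUB diffusion bridge models (obtained by Doob's $h$-transform). *)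

From HB Require Import structures.
From mathcomp Require Import all_boot all_order all_algebra.
From mathcomp Require Import all_classical all_reals all_analysis.
Set Implicit Arguments.
Unset Strict Implicit.
Unset Printing Implicit Defensive.
Import Order.TTheory GRing.Theory Num.Theory.
Import numFieldNormedType.Exports.
Local Open Scope classical_set_scope.
Local Open Scope ring_scope.

Section UniDB.
Variable R : realType.

Definition fbar (f : R -> R) (s t : R) : R :=
  (\int[@lebesgue_measure R]_(z in `[s, t]) f z)%R.

Definition hbar (f h : R -> R) (s t : R) : R :=
  (\int[@lebesgue_measure R]_(z in `[s, t]) (expR (- fbar f 0 z) * h z))%R.

Definition g2bar (f g : R -> R) (s t : R) : R :=
  (\int[@lebesgue_measure R]_(z in `[s, t]) (expR (- (2 * fbar f 0 z)) * g z ^+ 2))%R.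

Definition ustar (d : nat) (T : R) (f h g : R -> R) (m xT : 'rV[R]_d)
    (gamma t : R) (x : 'rV[R]_d) : 'rV[R]_d :=
  (g t * expR (fbar f t T) / (gamma^-1 + expR (2 * fbar f 0 T) * g2bar f g t T))
    *: (xT - expR (fbar f t T) *: x - (expR (fbar f 0 T) * hbar f h t T) *: m).

Definition unidb_drift (d : nat) (T : R) (f h g : R -> R) (m xT : 'rV[R]_d)
    (gamma t : R) (x : 'rV[R]_d) : 'rV[R]_d :=
  f t *: x + h t *: m + g t *: ustar T f h g m xT gamma t x.

Definition alphaVP (g : R -> R) (t : R) : R :=
  expR (- (1 / 2) * (\int[@lebesgue_measure R]_(z in `[0, t]) (g z ^+ 2))%R).
Definition sigma2VP (g : R -> R) (t : R) : R := 1 - alphaVP g t ^+ 2.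
Definition SNR (g : R -> R) (t : R) : R := alphaVP g t ^+ 2 / sigma2VP g t.

End UniDB.

From HB Require Import structures.
From mathcomp Require Import all_boot all_order all_algebra.
From mathcomp Require Import all_classical all_reals all_analysis.
From mathcomp Require Import ring.

(** As gamma -> +oo the controller u*_{t,gamma} converges to the feedback law
  obtained by dropping gamma^-1 from its denominator, which is legitimate since
  e^{2 fbar_T} gbar^2_{t:T} > 0 for t < T.  In the three schedules the weights
  of hbar and gbar^2 are exact derivatives: gbar^2_{t:T} = sigma^2_T - sigma^2_t
  for DDBM (VE), while for DDBM (VP) and GOUB both g^2 and h are constant
  multiples of -f, so that e^{-k fbar_z} (-k f_z) = d/dz e^{-k fbar_z} and both
  integrals are differences of exponentials of fbar.  Writing u = e^{fbar_t}
  and v = e^{fbar_T} (in the VP case these are alpha_t and alpha_T) the limit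
  drift becomes a rational function of u and v, and the claimed forms follow
  by field arithmetic. *)

Set Implicit Arguments.
Unset Strict Implicit.
Unset Printing Implicit Defensive.

Import Order.TTheory GRing.Theory Num.Theory.
Import numFieldNormedType.Exports.
Local Open Scope classical_set_scope.
Local Open Scope ring_scope.

Section within_continuity.
Variables (R : realType) (A : set R).
Implicit Types f g : R -> R.

Lemma within_continuousM f g : {within A, continuous f} ->
  {within A, continuous g} -> {within A, continuous (fun z => f z * g z)}.
Proof. by move=> cf cg x; apply: continuousM; [exact: cf | exact: cg]. Qed.

Lemma within_continuousMl k f : {within A, continuous f} ->
  {within A, continuous (fun z => k * f z)}.
Proof. by move=> cf; apply: within_continuousM => // x; exact: cvg_cst. Qed.

Lemma within_continuousN f : {within A, continuous f} ->
  {within A, continuous (fun z => - f z)}.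
Proof. by move=> cf x; apply: continuousN; exact: cf. Qed.

Lemma within_continuous_expR f : {within A, continuous f} ->
  {within A, continuous (fun z => expR (f z))}.
Proof.
by move=> cf x; apply: continuous_comp; [exact: cf | exact: continuous_expR].
Qed.

End within_continuity.

Lemma within_continuous_subitv (R : realType) (f : R -> R) (a b c e : R) :
  a <= c -> e <= b -> {within `[a, b], continuous f} ->
  {within `[c, e], continuous f}.
Proof.
move=> ac eb; apply: continuous_subspaceW.
by apply: subset_itvScc; rewrite bnd_simp.
Qed.

Section primitive.
Variable R : realType.
Local Notation mu := (@lebesgue_measure R).
Implicit Types (f F : R -> R) (a b x : R).

Lemma continuous_itv_integrable f a b : {within `[a, b], continuous f} ->
  mu.-integrable `[a, b] (EFin \o f).
Proof.
by move=> cf; apply: continuous_compact_integrable => //; exact: segment_compact.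
Qed.

Lemma Rintegral_continuous_FTC2 f F a b : a < b ->
  {within `[a, b], continuous f} -> {within `[a, b], continuous F} ->
  (forall x, a < x < b -> is_derive x 1 F (f x)) ->
  \int[mu]_(x in `[a, b]) f x = F b - F a.
Proof.
move=> ab cf cF dF; rewrite /Rintegral (@continuous_FTC2 _ f F _ _ ab cf) //=.
  have [_ Fa Fb] := (continuous_within_itvP _ ab).1 cF.
  by split=> // x; rewrite in_itv /= => /dF [].
by move=> x; rewrite in_itv /= => /dF [_ <-]; rewrite derive1E.
Qed.

Lemma is_derive_integral f a b x : {within `[a, b], continuous f} ->
  a < x < b -> is_derive x 1 (fun z => \int[mu]_(t in `[a, z]) f t) (f x).
Proof.
move=> cf /andP[ax xb].
have cx : {for x, continuous f}.
  apply: (within_continuous_continuous _ cf); last by rewrite in_itv /= ax xb.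
  exact: lt_trans xb.
have [dx <-] := continuous_FTC1_closed xb (continuous_itv_integrable cf) ax cx.
by rewrite derive1E; exact: derivableP.
Qed.

Lemma within_continuous_integral f a b :
  a <= b -> {within `[a, b], continuous f} ->
  {within `[a, b], continuous (fun z => \int[mu]_(t in `[a, z]) f t)}.
Proof.
move=> ab cf.
exact: parameterized_integral_continuous ab (continuous_itv_integrable cf).
Qed.

Lemma Rintegral_itv_gt0 f a b : a < b -> {within `[a, b], continuous f} ->
  (forall x, a <= x <= b -> 0 < f x) -> 0 < \int[mu]_(x in `[a, b]) f x.
Proof.
move=> ab cf fpos.
have [c] := MVT ab (fun x xab => is_derive_integral cf (xab : a < x < b))
  (within_continuous_integral (ltW ab) cf).
rewrite in_itv /= set_itv1 Rintegral_set1 subr0 => /andP[ac cb] ->.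
by rewrite mulr_gt0 ?subr_gt0 // fpos // !ltW.
Qed.

End primitive.

Section unidb_integrals.
Variable R : realType.
Implicit Types (f g h q : R -> R) (a b c k t T : R).

Lemma fbarZ f k a b : {within `[a, b], continuous f} ->
  fbar (fun z => k * f z) a b = k * fbar f a b.
Proof.
by move=> cf; rewrite /fbar RintegralZl //; exact: continuous_itv_integrable.
Qed.

Lemma fbarN f a b : {within `[a, b], continuous f} ->
  fbar (fun z => - f z) a b = - fbar f a b.
Proof.
move=> cf; rewrite -mulN1r -fbarZ //.
by apply: eq_Rintegral => z _; rewrite mulN1r.
Qed.

Lemma fbar0 a b : fbar (fun=> 0) a b = 0 :> R.
Proof. by rewrite /fbar Rintegral_cst // mul0r. Qed.

Lemma hbar0 f a b : hbar f (fun=> 0) a b = 0.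
Proof.
rewrite /hbar (@eq_Rintegral _ _ _ _ _ (fun=> 0)) ?Rintegral_cst ?mul0r //.
by move=> z _; rewrite mulr0.
Qed.

Lemma fbar_lt0 f a b T : 0 <= a -> a < b -> b <= T ->
  {within `[0, T], continuous f} -> (forall z, 0 <= z <= T -> f z < 0) ->
  fbar f a b < 0.
Proof.
move=> a0 ab bT cf fneg; have cfab := within_continuous_subitv a0 bT cf.
rewrite -oppr_gt0 -fbarN //; apply: Rintegral_itv_gt0 => //.
  exact: within_continuousN.
move=> z /andP[az zb].
by rewrite oppr_gt0 fneg // (le_trans a0 az) (le_trans zb bT).
Qed.

Lemma fbar_split f t T : {within `[0, T], continuous f} -> 0 <= t <= T ->
  fbar f t T = fbar f 0 T - fbar f 0 t.
Proof.
move=> cf /andP[t0 tT]; have intf := continuous_itv_integrable cf.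
rewrite /fbar Rintegral_itvB ?bnd_simp // Rintegral_itv_obnd_cbnd //.
by apply: integrableS intf => //; apply: subset_itvr; rewrite bnd_simp.
Qed.

Lemma is_derive_expR_fbar f k T x : {within `[0, T], continuous f} -> 0 < x < T ->
  is_derive x 1 (fun z => expR (k * fbar f 0 z))
    (expR (k * fbar f 0 x) * (k * f x)).
Proof.
move=> cf xT; apply: (@is_derive1_comp _ expR (fun z => k * fbar f 0 z)).
exact: is_deriveZ (is_derive_integral cf xT).
Qed.

Lemma Rintegral_expR_fbar f q k c t T :
  {within `[0, T], continuous f} -> {within `[0, T], continuous q} ->
  0 <= t < T -> (forall z, 0 < z < T -> q z = c * (k * f z)) ->
  \int[lebesgue_measure]_(z in `[t, T]) (expR (k * fbar f 0 z) * q z) =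
    c * (expR (k * fbar f 0 T) - expR (k * fbar f 0 t)).
Proof.
move=> cf cq /andP[t0 tT] qE.
have cE : {within `[0, T], continuous (fun z => expR (k * fbar f 0 z))}.
  by apply/within_continuous_expR/within_continuousMl/within_continuous_integral;
    rewrite ?(le_trans t0 (ltW tT)).
rewrite mulrBr.
apply: (Rintegral_continuous_FTC2 (F := fun z => c * expR (k * fbar f 0 z)) tT).
- by apply: within_continuous_subitv t0 (lexx T) _; exact: within_continuousM.
- by apply: within_continuous_subitv t0 (lexx T) _; exact: within_continuousMl.
move=> x /andP[tx xT]; have x0T : 0 < x < T by rewrite xT (le_lt_trans t0 tx).
rewrite qE // mulrCA; exact: is_deriveZ (is_derive_expR_fbar k cf x0T).
Qed.

Lemma hbar_expR f h t T :
  {within `[0, T], continuous f} -> {within `[0, T], continuous h} ->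
  0 <= t < T -> (forall z, 0 < z < T -> h z = - f z) ->
  hbar f h t T = expR (- fbar f 0 T) - expR (- fbar f 0 t).
Proof.
move=> cf ch tT hE; rewrite /hbar.
under eq_Rintegral do rewrite -mulN1r.
rewrite (Rintegral_expR_fbar (c := 1)) // ?mul1r ?mulN1r // => z zT.
by rewrite hE // mul1r mulN1r.
Qed.

Lemma g2bar_expR f g c t T :
  {within `[0, T], continuous f} -> {within `[0, T], continuous g} ->
  0 <= t < T -> (forall z, 0 < z < T -> g z ^+ 2 = c * (-2 * f z)) ->
  g2bar f g t T = c * (expR (- (2 * fbar f 0 T)) - expR (- (2 * fbar f 0 t))).
Proof.
move=> cf cg tT gE; rewrite /g2bar.
under eq_Rintegral do rewrite -mulNr.
rewrite (Rintegral_expR_fbar (k := -2) (c := c)) ?mulNr //.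
by apply: within_continuousM.
Qed.

End unidb_integrals.

Section unidb_limit.
Variables (R : realType) (d : nat).
Implicit Types (f g h : R -> R) (m xT x y : 'rV[R]_d) (t T : R).

Definition unidb_drift_inf T f h g m xT t x : 'rV[R]_d :=
  f t *: x + h t *: m + g t *:
    ((g t * expR (fbar f t T) / (expR (2 * fbar f 0 T) * g2bar f g t T))
      *: (xT - expR (fbar f t T) *: x - (expR (fbar f 0 T) * hbar f h t T) *: m)).

Lemma unidb_drift_cvg T f h g m xT t x y : g2bar f g t T != 0 ->
  unidb_drift_inf T f h g m xT t x = y ->
  unidb_drift T f h g m xT gamma t x @[gamma --> +oo] --> y.
Proof.
move=> G0 <-; rewrite /unidb_drift /ustar /unidb_drift_inf.
set D := expR (2 * fbar f 0 T) * g2bar f g t T.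
have D0 : D != 0 by rewrite mulf_neq0 // gt_eqF // expR_gt0.
have inv0 : (fun gamma : R => gamma^-1) @ +oo --> (0 : R).
  by apply/gtr0_cvgV0; [near=> gamma | exact: cvg_id].
apply: cvgD; first exact: cvg_cst.
apply: cvgZ; first exact: cvg_cst.
apply: cvgZ; last exact: cvg_cst.
apply: cvgM; first exact: cvg_cst.
apply: cvgV => //; rewrite -[X in _ --> X]add0r.
by apply: cvgD => //; exact: cvg_cst.
Unshelve. all: by end_near.
Qed.

End unidb_limit.

Section schedules.
Variables (R : realType) (d : nat).
Implicit Types (g theta : R -> R) (m xT x : 'rV[R]_d) (t T lambda : R).

Lemma ddbm_ve_drift T g sigma2 m xT t x :
  {within `[0, T], continuous g} -> (forall z, 0 <= z <= T -> 0 < g z) ->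
  {within `[0, T], continuous sigma2} ->
  (forall z, 0 < z < T -> is_derive z 1 sigma2 (g z ^+ 2)) -> 0 <= t < T ->
  unidb_drift T (fun=> 0) (fun=> 0) g m xT gamma t x @[gamma --> +oo] -->
  (g t ^+ 2 / (sigma2 T - sigma2 t)) *: (xT - x).
Proof.
move=> cg gpos cs ds /andP[t0 tT].
have cg2 : {within `[t, T], continuous (fun z => g z ^+ 2)}.
  by apply: within_continuous_subitv t0 (lexx T) _; exact: within_continuousM.
have G : g2bar (fun=> 0) g t T = \int[lebesgue_measure]_(z in `[t, T]) (g z ^+ 2).
  by apply: eq_Rintegral => z _; rewrite fbar0 mulr0 oppr0 expR0 mul1r.
have sE : g2bar (fun=> 0) g t T = sigma2 T - sigma2 t.
  rewrite G; apply: Rintegral_continuous_FTC2 => //.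
    exact: within_continuous_subitv t0 (lexx T) cs.
  by move=> z /andP[tz zT]; apply: ds; rewrite zT (le_lt_trans t0 tz).
have s0 : sigma2 T - sigma2 t != 0.
  rewrite -sE G gt_eqF // Rintegral_itv_gt0 // => z /andP[tz zT].
  by rewrite exprn_gt0 // gpos // zT (le_trans t0 tz).
apply: unidb_drift_cvg; first by rewrite sE.
rewrite /unidb_drift_inf sE hbar0 !fbar0 mulr0 expR0.
by apply/rowP => i; rewrite !mxE; field.
Qed.

Lemma ddbm_vp_drift T g m xT t x :
  {within `[0, T], continuous g} -> (forall z, 0 <= z <= T -> 0 < g z) ->
  0 < t < T ->
  unidb_drift T (fun z => - (1 / 2) * g z ^+ 2) (fun=> 0) g m xT gamma t x
    @[gamma --> +oo] -->
  (- (1 / 2) * g t ^+ 2) *: x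
  + (g t ^+ 2 / (sigma2VP g t * (SNR g t / SNR g T - 1)))
    *: ((alphaVP g t / alphaVP g T) *: xT - x).
Proof.
move=> cg gpos /andP[t0 tT]; have T0 : 0 < T by exact: lt_trans tT.
set q := fun z => g z ^+ 2; set f := fun z => - (1 / 2) * q z.
have cq : {within `[0, T], continuous q} by exact: within_continuousM.
have cf : {within `[0, T], continuous f} by exact: within_continuousMl.
have fneg z : 0 <= z <= T -> f z < 0.
  by move=> zT; rewrite /f mulNr oppr_lt0 mulr_gt0 // exprn_gt0 // gpos.
have alphaE z : 0 <= z <= T -> alphaVP g z = expR (fbar f 0 z).
  move=> /andP[_ zT]; rewrite fbarZ //.
  exact: within_continuous_subitv (lexx 0) zT cq.
have tT' : 0 <= t < T by rewrite ltW.
have Ft : fbar f 0 t < 0 by exact: fbar_lt0 (lexx 0) t0 (ltW tT) cf fneg.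
have FtT : fbar f 0 T < fbar f 0 t.
  rewrite -subr_lt0 -fbar_split ?(fbar_lt0 (ltW t0) tT (lexx T) cf fneg) //.
  by rewrite !ltW.
have G : g2bar f g t T = expR (- (2 * fbar f 0 T)) - expR (- (2 * fbar f 0 t)).
  by rewrite (g2bar_expR (c := 1)) ?mul1r // => z _; rewrite /f /q; field.
apply: unidb_drift_cvg.
  by rewrite G subr_eq0 gt_eqF // ltr_expR ltrN2 ltr_pM2l.
rewrite /unidb_drift_inf /SNR /sigma2VP G hbar0 fbar_split ?ltW //.
rewrite !alphaE ?lexx ?ltW //.
rewrite !expRB !expRN !expRM_natl.
have v0 := expR_gt0 (fbar f 0 T).
have vu : expR (fbar f 0 T) < expR (fbar f 0 t) by rewrite ltr_expR.
have u1 : expR (fbar f 0 t) < 1 by rewrite expR_lt1.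
move: (expR (fbar f 0 t)) (expR (fbar f 0 T)) v0 vu u1 => u v v0 vu u1.
have u0 : 0 < u by exact: lt_trans vu.
have u2 : u ^+ 2 < 1 by rewrite exprn_ilt1 // ltW.
have v2 : v ^+ 2 < u ^+ 2 by rewrite ltrXn2r // ltW.
apply/rowP => i; rewrite !mxE /f /q; field.
rewrite !gt_eqF //= ?subr_gt0 ?(lt_trans v2) //.
by rewrite (_ : _ + _ = u ^+ 2 - v ^+ 2) ?subr_gt0 //; ring.
Qed.

Lemma goub_drift T g theta lambda xT t x :
  {within `[0, T], continuous g} -> {within `[0, T], continuous theta} ->
  (forall z, 0 <= z <= T -> 0 < theta z) -> 0 < lambda ->
  (forall z, 0 <= z <= T -> g z ^+ 2 = 2 * lambda ^+ 2 * theta z) ->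
  0 <= t < T ->
  unidb_drift T (fun z => - theta z) theta g xT xT gamma t x
    @[gamma --> +oo] -->
  (theta t + g t ^+ 2 * expR (- (2 * fbar theta t T))
               / (lambda ^+ 2 * (1 - expR (- (2 * fbar theta t T)))))
    *: (xT - x).
Proof.
move=> cg cth thpos l0 gE /andP[t0 tT].
have tT' : 0 <= t <= T by rewrite t0 ltW.
set f := fun z => - theta z.
have cf : {within `[0, T], continuous f} by exact: within_continuousN.
have thetaE : fbar theta t T = - fbar f t T.
  by rewrite fbarN ?opprK //; exact: within_continuous_subitv t0 (lexx T) cth.
have fneg z : 0 <= z <= T -> f z < 0 by move=> zT; rewrite oppr_lt0 thpos.
have FtT : fbar f 0 T < fbar f 0 t.
  by rewrite -subr_lt0 -fbar_split ?(fbar_lt0 t0 tT (lexx T) cf fneg).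
have H : hbar f theta t T = expR (- fbar f 0 T) - expR (- fbar f 0 t).
  by rewrite hbar_expR ?t0 // => z _; rewrite opprK.
have G : g2bar f g t T =
    lambda ^+ 2 * (expR (- (2 * fbar f 0 T)) - expR (- (2 * fbar f 0 t))).
  rewrite (g2bar_expR (c := lambda ^+ 2)) ?t0 // => z /andP[z0 zT].
  by rewrite gE ?(ltW z0) ?(ltW zT) // /f; ring.
apply: unidb_drift_cvg.
  by rewrite G mulf_neq0 ?expf_neq0 ?gt_eqF // subr_gt0 ltr_expR ltrN2 ltr_pM2l.
rewrite /unidb_drift_inf G H thetaE fbar_split //.
rewrite !mulrN !opprK !expRN !expRM_natl !expRB.
have v0 := expR_gt0 (fbar f 0 T).
have vu : expR (fbar f 0 T) < expR (fbar f 0 t) by rewrite ltr_expR.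
move: (expR (fbar f 0 t)) (expR (fbar f 0 T)) v0 vu => u v v0 vu.
have u0 : 0 < u by exact: lt_trans vu.
have v2 : v ^+ 2 < u ^+ 2 by rewrite ltrXn2r // ltW.
apply/rowP => i; rewrite !mxE /f; field.
by rewrite !gt_eqF //= ?subr_gt0 ?mulr_gt0 ?exprn_gt0.
Qed.

End schedules.

Theorem proposition4p4 (R : realType) (d : nat) (T : R) (g : R -> R)
    (xT : 'rV[R]_d) :
  0 < T ->
  {within `[0, T], continuous g} ->
  (forall t, 0 <= t <= T -> 0 < g t) ->
  (* (i) DDBM (VE): f = 0, h = 0 *)
  (forall (m : 'rV[R]_d) (sigma2 : R -> R),
      {within `[0, T], continuous sigma2} ->
      (forall t, 0 < t < T -> is_derive t 1 sigma2 (g t ^+ 2)) ->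
      forall t, 0 <= t < T -> forall x : 'rV[R]_d,
        unidb_drift T (fun=> 0) (fun=> 0) g m xT gamma t x @[gamma --> +oo] -->
        (g t ^+ 2 / (sigma2 T - sigma2 t)) *: (xT - x)) /\
  (* (ii) DDBM (VP): f = -g^2/2, h = 0 *)
  (forall (m : 'rV[R]_d) t, 0 < t < T -> forall x : 'rV[R]_d,
        unidb_drift T (fun z => - (1 / 2) * g z ^+ 2) (fun=> 0) g m xT gamma t x
          @[gamma --> +oo] -->
        (- (1 / 2) * g t ^+ 2) *: x
        + (g t ^+ 2 / (sigma2VP g t * (SNR g t / SNR g T - 1)))
          *: ((alphaVP g t / alphaVP g T) *: xT - x)) /\
  (* (iii) GOUB: f = -theta, h = theta, m = xT, g^2 = 2 lambda^2 theta *)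
  (forall (theta : R -> R) (lambda : R),
      {within `[0, T], continuous theta} ->
      (forall t, 0 <= t <= T -> 0 < theta t) ->
      0 < lambda ->
      (forall t, 0 <= t <= T -> g t ^+ 2 = 2 * lambda ^+ 2 * theta t) ->
      forall t, 0 <= t < T -> forall x : 'rV[R]_d,
        unidb_drift T (fun z => - theta z) theta g xT xT gamma t x
          @[gamma --> +oo] -->
        (theta t + g t ^+ 2 * expR (- (2 * fbar theta t T))
                     / (lambda ^+ 2 * (1 - expR (- (2 * fbar theta t T)))))
          *: (xT - x)).
Proof.
move=> _ cg gpos; split; [|split].
- by move=> m sigma2 cs ds t tT x; exact: ddbm_ve_drift.
- by move=> m t tT x; exact: ddbm_vp_drift.
- by move=> theta lambda cth thpos l0 gE t tT x; exact: goub_drift.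
Qed.
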